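(* Let $R$ be a commutative ring, let $n\ge 3$ be odd, $l\ge 1$, $m\ge 3$, and let $A\in R^{l\times n}$, $B\in R^{n\times m}$. Then: (i) if $m$ is odd, the product $AB$ can be computed using $n(lm+l+m-1)/2$ multiplications; (ii) if $m$ is even, the product $AB$ can be computed using $\big(n(lm+l+m-1)+l-1\big)/2$ multiplications.
   Context: ''The product can be computed using $k$ multiplications'' means: there are $k$ products, each a product of two linear forms with integer coefficients in the entries of $A$ and $B$ (the two factors may each involve entries of both $A$ and $B$; commutativity of $R$ may be used), such that every entry of $AB$ is an integer linear combination of these $k$ products, identically for all inputs $A,B$ over any commutative ring. Additions, subtractions and multiplications by integer constants are not counted. *)

From HB Require Import structures.
From mathcomp Require Import all_boot all_order all_algebra.
Set Implicit Arguments. Unset Strict Implicit. Unset Printing Implicit Defensive.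
Import GRing.Theory.
Local Open Scope ring_scope.

Definition linform (R : comPzRingType) (l n m : nat)
  (c : 'M[int]_(l, n) * 'M[int]_(n, m)) (A : 'M[R]_(l, n)) (B : 'M[R]_(n, m)) : R :=
  \sum_(i < l) \sum_(j < n) (c.1 i j)%:~R * A i j
  + \sum_(i < n) \sum_(j < m) (c.2 i j)%:~R * B i j.

(* The product of an l x n by an n x m matrix can be computed with k
   multiplications: there are k products of two integer linear forms in
   the entries of A and B such that every entry of AB is an integer linear
   combination of them, identically over every commutative ring. *)
Definition computable_with (l n m k : nat) : Prop :=
  exists (U V : 'I_k -> 'M[int]_(l, n) * 'M[int]_(n, m))
         (C : 'I_l -> 'I_m -> 'I_k -> int),
    forall (R : comPzRingType) (A : 'M[R]_(l, n)) (B : 'M[R]_(n, m))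
           (i : 'I_l) (j : 'I_m),
      (A *m B) i j =
      \sum_(t < k) (C i j t)%:~R * (linform (U t) A B * linform (V t) A B).

(* Since (AB)_ij splits as a sum over
   blocks of the inner index, schemes for inner dimensions n1 and n2 combine
   into one for n1 + n2 whose cost is the sum of the costs (scheme_add).

   Inner dimension 2 costs lm + l + m - 1 (pair_identity): one product per
   entry, one correction per row and one per nonzero column.  Inner
   dimension 3 costs 3(lm + l + m - 1)/2 for odd m and (l - 1)/2 more for
   even m: again one product per entry and one correction per column, but
   each correction involving row i serves two columns (or all columns of a
   parity), at the price of one extra product per pair of columns
   (column_zero_identity, odd_column_identity, even_column_identity).
   Writing n = 2p + 3, one block of width 3 and p blocks of width 2 give the
   theorem once the arithmetic of the costs is checked. *)

From mathcomp Require Import all_boot all_order all_algebra.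
From mathcomp Require Import ring zify.
Set Implicit Arguments. Unset Strict Implicit. Unset Printing Implicit Defensive.
Import GRing.Theory.
Local Open Scope ring_scope.

Notation form l n m := ('M[int]_(l, n) * 'M[int]_(n, m))%type.

Section LinearForms.
Variables (l n m : nat).

(* The coordinate forms A i k and B k j (zero when out of range). *)
Definition formA (i k : nat) : form l n m :=
  (\matrix_(i', k') ((i' == i :> nat) && (k' == k :> nat))%:R, 0).
Definition formB (k j : nat) : form l n m :=
  (0, \matrix_(k', j') ((k' == k :> nat) && (j' == j :> nat))%:R).

Variables (R : comPzRingType) (A : 'M[R]_(l, n)) (B : 'M[R]_(n, m)).

Lemma linformD (x y : form l n m) :
  linform (x + y) A B = linform x A B + linform y A B.
Proof.
rewrite /linform addrACA; congr (_ + _); rewrite -big_split; apply: eq_bigr => i _;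
  rewrite -big_split; apply: eq_bigr => j _; by rewrite !mxE intrD mulrDl.
Qed.

Lemma linformN (x : form l n m) : linform (- x) A B = - linform x A B.
Proof.
rewrite /linform opprD -!sumrN; congr (_ + _); apply: eq_bigr => i _;
  rewrite -sumrN; apply: eq_bigr => j _; by rewrite !mxE intrN mulNr.
Qed.

Lemma linform0 : linform 0 A B = 0.
Proof.
by rewrite /linform !big1 ?addr0 // => i _; rewrite big1 // => j _; rewrite mxE mul0r.
Qed.

Lemma sum_delta p q (M : 'M[R]_(p, q)) (i0 : 'I_p) (j0 : 'I_q) :
  \sum_(i < p) \sum_(j < q)
    ((((i == i0 :> nat) && (j == j0 :> nat))%:R : int)%:~R * M i j) = M i0 j0.
Proof.
rewrite (bigD1 i0) // (bigD1 j0) //= !eqxx mul1r.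
rewrite big1 => [|j nj]; last by rewrite val_eqE (negbTE nj) mul0r.
rewrite addr0 big1 ?addr0 // => i ni.
by rewrite big1 // => j _; rewrite val_eqE (negbTE ni) mul0r.
Qed.

Lemma linform_formA (i : 'I_l) (k : 'I_n) : linform (formA i k) A B = A i k.
Proof.
rewrite /linform /= [X in _ + X]big1 ?addr0 => [|k' _]; last first.
  by rewrite big1 // => j _; rewrite mxE mul0r.
by rewrite -(sum_delta A i k); apply: eq_bigr => i' _; apply: eq_bigr => k' _; rewrite mxE.
Qed.

Lemma linform_formB (k : 'I_n) (j : 'I_m) : linform (formB k j) A B = B k j.
Proof.
rewrite /linform /= [X in X + _]big1 ?add0r => [|i _]; last first.
  by rewrite big1 // => k' _; rewrite mxE mul0r.
by rewrite -(sum_delta B k j); apply: eq_bigr => k' _; apply: eq_bigr => j' _; rewrite mxE.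
Qed.

End LinearForms.
Arguments formA {l n m} i k.
Arguments formB {l n m} k j.

Definition scheme (l n m : nat) (I : finType) : Prop :=
  exists (U V : I -> form l n m) (C : 'I_l -> 'I_m -> I -> int),
    forall (R : comPzRingType) (A : 'M[R]_(l, n)) (B : 'M[R]_(n, m)) i j,
      (A *m B) i j =
      \sum_(t : I) (C i j t)%:~R * (linform (U t) A B * linform (V t) A B).

Lemma computable_of_scheme l n m (I : finType) :
  scheme l n m I -> computable_with l n m #|I|.
Proof.
case=> U [V [C HC]]; exists (U \o enum_val), (V \o enum_val).
exists (fun i j => C i j \o enum_val) => R A B i j.
by rewrite HC (big_enum_val (A := I)).
Qed.

Section InnerSplit.
Variables (l n1 n2 m : nat).

Definition embedL (c : form l n1 m) : form l (n1 + n2) m :=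
  (row_mx c.1 0, col_mx c.2 0).
Definition embedR (c : form l n2 m) : form l (n1 + n2) m :=
  (row_mx 0 c.1, col_mx 0 c.2).

Variables (R : comPzRingType) (A : 'M[R]_(l, n1 + n2)) (B : 'M[R]_(n1 + n2, m)).

Lemma linform_embedL c : linform (embedL c) A B = linform c (lsubmx A) (usubmx B).
Proof.
rewrite /linform /=; congr (_ + _).
  apply: eq_bigr => i _; rewrite big_split_ord /= [X in _ + X]big1 ?addr0.
    by apply: eq_bigr => k _; rewrite row_mxEl mxE.
  by move=> k _; rewrite row_mxEr mxE mul0r.
rewrite big_split_ord /= [X in _ + X]big1 ?addr0.
  by apply: eq_bigr => k _; apply: eq_bigr => j _; rewrite col_mxEu mxE.
by move=> k _; rewrite big1 // => j _; rewrite col_mxEd mxE mul0r.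
Qed.

Lemma linform_embedR c : linform (embedR c) A B = linform c (rsubmx A) (dsubmx B).
Proof.
rewrite /linform /=; congr (_ + _).
  apply: eq_bigr => i _; rewrite big_split_ord /= [X in X + _]big1 ?add0r.
    by apply: eq_bigr => k _; rewrite row_mxEr mxE.
  by move=> k _; rewrite row_mxEl mxE mul0r.
rewrite big_split_ord /= [X in X + _]big1 ?add0r.
  by apply: eq_bigr => k _; apply: eq_bigr => j _; rewrite col_mxEd mxE.
by move=> k _; rewrite big1 // => j _; rewrite col_mxEu mxE mul0r.
Qed.

End InnerSplit.
Arguments embedL {l n1} n2 {m} c.
Arguments embedR {l} n1 {n2 m} c.

(* AB = A_1 B_1 + A_2 B_2 for a splitting of the inner dimension, so schemes
   for the two halves combine into one whose cost is the sum of the costs. *)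
Lemma scheme_add l n1 n2 m (I1 I2 : finType) :
  scheme l n1 m I1 -> scheme l n2 m I2 -> scheme l (n1 + n2) m (I1 + I2)%type.
Proof.
case=> U1 [V1 [C1 H1]] [U2 [V2 [C2 H2]]].
pose glue (T : Type) (f1 : I1 -> T) (f2 : I2 -> T) (t : I1 + I2) :=
  match t with inl x => f1 x | inr y => f2 y end.
exists (glue _ (embedL n2 \o U1) (embedR n1 \o U2)).
exists (glue _ (embedL n2 \o V1) (embedR n1 \o V2)).
exists (fun i j => glue _ (C1 i j) (C2 i j)) => R A B i j.
rewrite -{1}(hsubmxK A) -{1}(vsubmxK B) mul_row_col mxE H1 H2 big_sumType /=.
rewrite /glue /=; congr (_ + _); apply: eq_bigr => t _;
  by rewrite ?linform_embedL ?linform_embedR.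
Qed.

Lemma computable_add l n1 n2 m k1 k2 :
  computable_with l n1 m k1 -> computable_with l n2 m k2 ->
  computable_with l (n1 + n2) m (k1 + k2).
Proof.
move=> H1 H2; have := computable_of_scheme (scheme_add H1 H2).
by rewrite card_sum !card_ord.
Qed.

Definition coef (s : int) (b : bool) : int := if b then s else 0.

Lemma sum_coef_one (R : comPzRingType) (I : finType) (P : pred I) (x : I) s (F : I -> R) :
  (forall t, P t = (t == x)) -> \sum_(t : I) (coef s (P t))%:~R * F t = s%:~R * F x.
Proof.
move=> HP; rewrite (bigD1 x) //= HP eqxx big1 ?addr0 // => t Ht.
by rewrite HP (negbTE Ht) mul0r.
Qed.

Lemma sum_coef_none (R : comPzRingType) (I : finType) (P : pred I) s (F : I -> R) :
  (forall t, P t = false) -> \sum_(t : I) (coef s (P t))%:~R * F t = 0.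
Proof. by move=> HP; rewrite big1 // => t _; rewrite HP mul0r. Qed.

Lemma mulmx_linform l n m (R : comPzRingType) (A : 'M[R]_(l, n)) (B : 'M[R]_(n, m)) i j :
  (A *m B) i j = \sum_(k < n) linform (formA i k) A B * linform (formB k j) A B.
Proof. by rewrite mxE; apply: eq_bigr => k _; rewrite linform_formA linform_formB. Qed.

(* The two-term identity behind the inner dimension 2 scheme: for any c,
   a0 b0 + a1 b1 is one product minus two corrections, the first depending
   only on the row (a0, a1) and the second only on the column (b0, b1). *)
Lemma pair_identity (R : comPzRingType) (a0 a1 b0 b1 c : R) :
  a0 * b0 + a1 * b1 = (a0 + b1 - c) * (a1 + b0) - (a0 - c) * a1 - (b1 - c) * b0.
Proof. by ring. Qed.

Section InnerDimensionTwo.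
Variables (l m : nat).

(* With c = B 1 0 the column correction vanishes on column 0, so one
   multiplication per entry, per row and per nonzero column suffice. *)
Definition pairI := ('I_l * 'I_m + 'I_l + 'I_m.-1)%type.

Definition pairU (t : pairI) : form l 2 m :=
  match t with
  | inl (inl (i, j)) => formA i 0 + formB 1 j - formB 1 0
  | inl (inr i) => formA i 0 - formB 1 0
  | inr s => formB 1 s.+1 - formB 1 0
  end.

Definition pairV (t : pairI) : form l 2 m :=
  match t with
  | inl (inl (i, j)) => formA i 1 + formB 0 j
  | inl (inr i) => formA i 1
  | inr s => formB 0 s.+1
  end.

Definition pairC (i : 'I_l) (j : 'I_m) (t : pairI) : int :=
  match t with
  | inl (inl p) => coef 1 (p == (i, j))
  | inl (inr i') => coef (-1) (i' == i)
  | inr s => coef (-1) (s.+1 == j :> nat)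
  end.

Lemma pair_scheme : (0 < m)%N -> scheme l 2 m pairI.
Proof.
move=> m_gt0; exists pairU, pairV, pairC => R A B i j.
rewrite mulmx_linform !big_ord_recr big_ord0 /= add0r !big_sumType /=.
rewrite (sum_coef_one (x := (i, j))) // (sum_coef_one (x := i)) //.
have [j0|j_gt0] := posnP j.
  rewrite sum_coef_none => [|s]; last by rewrite j0.
  rewrite /= j0 (pair_identity _ _ _ _ (linform (formB 1 0) A B)).
  by rewrite !(linformD, linformN) mul1r mulN1r subrr mul0r subr0 addr0.
have s_lt : (j.-1 < m.-1)%N by have := ltn_ord j; lia.
rewrite (sum_coef_one (x := Ordinal s_lt)) => [|s]; last first.
  by rewrite -val_eqE /=; apply/eqP/eqP; lia.
rewrite /= prednK // (pair_identity _ _ _ _ (linform (formB 1 0) A B)).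
by rewrite !(linformD, linformN) mul1r !mulN1r.
Qed.
End InnerDimensionTwo.

(* Each
   writes a0 b0 + a1 b1 + a2 b2 as one product, minus corrections depending
   only on the row (a0, a1, a2), minus one depending only on the column
   (b0, b1, b2), plus a term shared by two neighbouring columns. *)
Lemma column_zero_identity (R : comPzRingType) (a0 a1 a2 b0 b1 b2 y : R) :
  a0 * b0 + a1 * b1 + a2 * b2 =
  (a2 + b1) * (a0 + a1 + (b2 + y)) - (a1 + y) * a2 - (a2 + (b1 - b0)) * a0
  - b1 * (b2 + y).
Proof. by ring. Qed.

Lemma odd_column_identity (R : comPzRingType) (a0 a1 a2 b0 b1 b2 d z : R) :
  a0 * b0 + a1 * b1 + a2 * b2 =
  (a0 + b2) * (a1 + a2 + (b0 + d + z)) - (a2 + z) * a0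
  - (a0 + (b2 - b1)) * (a1 + d) - b2 * (b0 + d + z) + (b2 - b1) * d.
Proof. by ring. Qed.

Lemma even_column_identity (R : comPzRingType) (a0 a1 a2 b0 b1 b2 x y : R) :
  a0 * b0 + a1 * b1 + a2 * b2 =
  (a1 + (b2 + y)) * (a2 + a0 + (b1 + x)) - (a1 + y) * a2
  - (a0 + x) * (a1 + (b2 - b0 + y)) - (b2 + y) * (b1 + x) + x * (b2 - b0 + y).
Proof. by ring. Qed.

Lemma zero_odd_or_even (j : nat) :
  [\/ j = 0, exists s, j = s.*2.+1 | exists s, j = s.*2.+2]%N.
Proof.
case: j => [|j]; [exact: Or31 | rewrite -(odd_double_half j)].
by case: (odd j); [apply: Or33; exists j./2 | apply: Or32; exists j./2].
Qed.

Section InnerDimensionThree.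
Variables (l m : nat).

(* Column forms.  Y is chosen so that D 0 vanishes, X s and D s are
   attached to the pair of columns 2s+1, 2s+2, and D s = 0 when column
   2s+2 does not exist. *)
Definition formY : form l 3 m := formB 0 2 - formB 2 2.
Definition formZ : form l 3 m := formB 1 0 - formB 0 0.
Definition formX (s : nat) : form l 3 m := formB 2 s.*2.+1 - formB 1 s.*2.+1.
Definition formD (s : nat) : form l 3 m :=
  if (s.*2.+2 < m)%N then formB 2 s.*2.+2 - formB 0 s.*2.+2 + formY else 0.

Definition colU (j : nat) : form l 3 m :=
  if j == 0%N then formB 1 0 else if odd j then formB 2 j else formB 2 j + formY.
Definition colV (j : nat) : form l 3 m :=
  if j == 0%N then formB 2 0 + formY
  else if odd j then formB 0 j + formD j./2 + formZ
  else formB 1 j + formX j.-1./2.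

Definition mainU (i j : nat) : form l 3 m :=
  if j == 0%N then formA i 2 + colU j
  else if odd j then formA i 0 + colU j else formA i 1 + colU j.
Definition mainV (i j : nat) : form l 3 m :=
  if j == 0%N then formA i 0 + formA i 1 + colV j
  else if odd j then formA i 1 + formA i 2 + colV j
  else formA i 2 + formA i 0 + colV j.

(* Multiplications: one per entry, three families of row corrections, one
   per column, and the shared terms X t D t for the columns 2t+1, 2t+2 with
   1 <= t and 2t+2 < m (for t = 0 or 2t+2 >= m they vanish). *)
Definition tripleI := ('I_l * 'I_m + 'I_l + 'I_l + 'I_l * 'I_(m./2) + 'I_m
                       + 'I_((m - 3)./2))%type.

Definition tripleU (t : tripleI) : form l 3 m :=
  match t with
  | inl (inl (inl (inl (inl (i, j))))) => mainU i j
  | inl (inl (inl (inl (inr i)))) => formA i 1 + formY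
  | inl (inl (inl (inr i))) => formA i 2 + formZ
  | inl (inl (inr (i, s))) => formA i 0 + formX s
  | inl (inr j) => colU j
  | inr t => formX t.+1
  end.

Definition tripleV (t : tripleI) : form l 3 m :=
  match t with
  | inl (inl (inl (inl (inl (i, j))))) => mainV i j
  | inl (inl (inl (inl (inr i)))) => formA i 2
  | inl (inl (inl (inr i))) => formA i 0
  | inl (inl (inr (i, s))) => formA i 1 + formD s
  | inl (inr j) => colV j
  | inr t => formD t.+1
  end.

(* Entry (i, j) uses its own product and column correction, the row
   corrections (a1 + Y) a2 for even j, (a2 + Z) a0 for j = 0 or odd j,
   (a0 + X s)(a1 + D s) for j = 2s+1, 2s+2, and the shared X s D s. *)
Definition tripleC (i : 'I_l) (j : 'I_m) (t : tripleI) : int :=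
  match t with
  | inl (inl (inl (inl (inl p)))) => coef 1 (p == (i, j))
  | inl (inl (inl (inl (inr i')))) => coef (-1) ((i' == i) && ~~ odd j)
  | inl (inl (inl (inr i'))) => coef (-1) ((i' == i) && ((j == 0 :> nat) || odd j))
  | inl (inl (inr p)) => coef (-1) [&& p.1 == i, (0 < j)%N & p.2 == j.-1./2 :> nat]
  | inl (inr j') => coef (-1) (j' == j)
  | inr t => coef 1 (t.+1 == j.-1./2 :> nat)
  end.

Hypothesis m_ge3 : (3 <= m)%N.
Variables (R : comPzRingType) (A : 'M[R]_(l, 3)) (B : 'M[R]_(3, m)).

(* The shared term vanishes at both ends: D 0 = 0 by the choice of Y. *)
Lemma formD_first : linform (formD 0) A B = 0.
Proof. by rewrite /formD m_ge3 !(linformD, linformN) addrC subrKA subrr. Qed.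

Lemma formD_last s : (m <= s.*2.+2)%N -> linform (formD s) A B = 0.
Proof. by rewrite /formD ltnNge => ->; rewrite linform0. Qed.

Lemma shared_sum s :
  \sum_(t < (m - 3)./2) (coef 1 (t.+1 == s))%:~R *
     (linform (formX t.+1) A B * linform (formD t.+1) A B) =
  linform (formX s) A B * linform (formD s) A B.
Proof.
have [s0|s_gt0] := posnP s.
  by rewrite s0 formD_first mulr0 sum_coef_none.
have [s_lt|s_ge] := ltnP s.*2.+2 m.
  have t_lt : (s.-1 < (m - 3)./2)%N by lia.
  rewrite (sum_coef_one (x := Ordinal t_lt)) /= ?prednK ?mul1r // => t.
  by rewrite -val_eqE /=; apply/eqP/eqP; lia.
rewrite formD_last // mulr0 sum_coef_none // => t.
by apply/negbTE/eqP; have := ltn_ord t; lia.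
Qed.

(* Correctness of the scheme, column by column: after selecting the
   multiplications used by entry (i, j), it is one of the three identities. *)
Lemma triple_entry (i : 'I_l) (j : 'I_m) :
  (A *m B) i j = \sum_(t : tripleI)
    (tripleC i j t)%:~R * (linform (tripleU t) A B * linform (tripleV t) A B).
Proof.
rewrite mulmx_linform !big_ord_recr big_ord0 /= add0r !big_sumType /=.
rewrite (sum_coef_one (x := (i, j))) // (sum_coef_one (x := j)) //.
have [j0|[s j_odd]|[s j_even]] := zero_odd_or_even j.
- rewrite (sum_coef_one (x := i)) => [|i']; last by rewrite j0 andbT.
  rewrite (sum_coef_one (x := i)) => [|i']; last by rewrite j0 andbT.
  rewrite !sum_coef_none => [|t|[i' s]] /=; rewrite ?j0 ?andbF //.
  rewrite /mainU /mainV /colU /colV /= mul1r !mulN1r !addr0 !(linformD, linformN).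
  exact: column_zero_identity.
- have s_lt : (s < m./2)%N by have := ltn_ord j; lia.
  rewrite j_odd /= odd_double doubleK shared_sum.
  rewrite sum_coef_none => [|i']; last by rewrite andbF.
  rewrite (sum_coef_one (x := i)) => [|i']; last by rewrite andbT.
  rewrite (sum_coef_one (x := (i, Ordinal s_lt))) => [|[i' s']]; last first.
    by rewrite xpair_eqE -val_eqE.
  rewrite /mainU /mainV /colU /colV /= odd_double uphalf_double mul1r !mulN1r addr0.
  rewrite !(linformD, linformN).
  exact: odd_column_identity.
- have s_lt : (s < m./2)%N by have := ltn_ord j; lia.
  have formD_s : formD s = formB 2 s.*2.+2 - formB 0 s.*2.+2 + formY.
    by rewrite /formD -j_even ltn_ord.
  rewrite j_even /= negbK odd_double uphalf_double shared_sum.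
  rewrite (sum_coef_one (x := i)) => [|i']; last by rewrite andbT.
  rewrite sum_coef_none => [|i']; last by rewrite andbF.
  rewrite (sum_coef_one (x := (i, Ordinal s_lt))) => [|[i' s']]; last first.
    by rewrite xpair_eqE -val_eqE.
  rewrite /mainU /mainV /colU /colV /= negbK odd_double uphalf_double.
  rewrite mul1r !mulN1r addr0 formD_s !(linformD, linformN).
  exact: even_column_identity.
Qed.
End InnerDimensionThree.

Lemma triple_scheme l m : (3 <= m)%N -> scheme l 3 m (tripleI l m).
Proof.
move=> m_ge3; exists (@tripleU l m), (@tripleV l m), (@tripleC l m).
by move=> R A B; apply: triple_entry.
Qed.

Definition pair_cost (l m : nat) : nat := l * m + l + m.-1.
Definition triple_cost (l m : nat) : nat :=
  l * m + l + l + l * m./2 + m + (m - 3)./2.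

Lemma pair_computable l m : (0 < m)%N -> computable_with l 2 m (pair_cost l m).
Proof.
move=> m_gt0; have := computable_of_scheme (pair_scheme l m_gt0).
by rewrite !card_sum card_prod !card_ord.
Qed.

Lemma triple_computable l m : (3 <= m)%N -> computable_with l 3 m (triple_cost l m).
Proof.
move=> m_ge3; have := computable_of_scheme (triple_scheme l m_ge3).
by rewrite !card_sum !card_prod !card_ord.
Qed.

Lemma odd_inner_computable l m p : (3 <= m)%N ->
  computable_with l (p.*2 + 3) m (triple_cost l m + p * pair_cost l m).
Proof.
move=> m_ge3; elim: p => [|p IH]; first by rewrite mul0n addn0; exact: triple_computable.
rewrite mulSnr addnA (_ : (p.+1).*2 + 3 = p.*2 + 3 + 2)%N; last by rewrite doubleS; lia.
exact: computable_add IH (pair_computable l (ltnW (ltnW m_ge3))).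
Qed.

Lemma triple_cost_double l m : (1 <= l)%N -> (3 <= m)%N ->
  (triple_cost l m).*2 = (3 * pair_cost l m + (if odd m then 0 else l.-1))%N.
Proof.
move=> l_ge1 m_ge3; rewrite /triple_cost /pair_cost.
have m_half := odd_double_half m; have m3_half := odd_double_half (m - 3).
rewrite oddB // in m3_half.
case: (odd m) m_half m3_half => /= m_half m3_half; nia.
Qed.

Theorem mainTheorem6 (n l m : nat) :
  odd n -> (3 <= n)%N -> (1 <= l)%N -> (3 <= m)%N ->
  (odd m -> computable_with l n m (n * (l * m + l + m - 1) %/ 2)) /\
  (~~ odd m -> computable_with l n m ((n * (l * m + l + m - 1) + l - 1) %/ 2)).
Proof.
move=> n_odd n_ge3 l_ge1 m_ge3.
have [p ->] : exists p, n = (p.*2 + 3)%N.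
  by exists (n./2).-1; have := odd_double_half n; rewrite n_odd; lia.
have cost := triple_cost_double l_ge1 m_ge3.
have pair_costE : (l * m + l + m - 1 = pair_cost l m)%N by rewrite /pair_cost; lia.
have := odd_inner_computable l p m_ge3; rewrite pair_costE.
split=> m_parity.
- rewrite m_parity in cost.
  rewrite (_ : _ * _ = (triple_cost l m + p * pair_cost l m).*2)%N ?divn2 ?doubleK //.
  by rewrite doubleD cost; lia.
- rewrite (negbTE m_parity) in cost.
  rewrite (_ : _ + _ - 1 = (triple_cost l m + p * pair_cost l m).*2)%N ?divn2 ?doubleK //.
  by rewrite doubleD cost; lia.
Qed.
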